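(* Let $f:M\to M$ be a partially hyperbolic endomorphism of a closed manifold $M$, let $x\in M$, and let $E^c_f(x)$ and $F^c_f(x)$ be two center directions at $x$ (arising from possibly different orbits through $x$). Then $F^c_f(x)\subset E^c_f(x)\oplus E^s_f(x)$. In particular, the subspace $E^{cs}_f(x)=E^c_f(x)\oplus E^s_f(x)$ does not depend on the orbit through $x$.
   Context: A $C^1$ local diffeomorphism $f:M\to M$ is a partially hyperbolic endomorphism if there are a Riemannian metric and constants $0<\nu<\gamma_1\le\gamma_2<\mu$, $\nu<1<\mu$, $C>1$ such that for every orbit $(x_n)_{n\in\mathbb{Z}}$ ($f(x_n)=x_{n+1}$) there is a splitting $T_{x_n}M=E^s_f(x_n)\oplus E^c_f(x_n)\oplus E^u_f(x_n)$, $Df$-invariant along the orbit, with $\|Df^n_{x_i}v^s\|\le C\nu^n\|v^s\|$, $C^{-1}\gamma_1^n\|v^c\|\le\|Df^n_{x_i}v^c\|\le C\gamma_2^n\|v^c\|$, $C^{-1}\mu^n\|v^u\|\le\|Df^n_{x_i}v^u\|$ for all $n\ge0$, $i\in\mathbb{Z}$, $v^\ast\in E^\ast_f(x_i)$. A center direction at $x$ is $E^c_f(x_0)$ for some orbit with $x_0=x$. The stable subspace $E^s_f(x)$ is the same for all orbits through $x$. *)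

From HB Require Import structures.
From mathcomp Require Import all_boot all_order all_algebra.
From mathcomp Require Import reals.
Set Implicit Arguments. Unset Strict Implicit. Unset Printing Implicit Defensive.
Import Order.TTheory GRing.Theory Num.Theory.
Local Open Scope ring_scope.

(* Abstract model of the tangent bundle of a d-dimensional manifold M:
   every tangent space T_xM is identified (pointwise, no continuity needed)
   with the row vectors 'rV[R]_d; the derivative Df x : T_xM -> T_{f x}M
   is v |-> v *m Df x (row-vector convention); a Riemannian metric is a
   family of symmetric positive definite Gram matrices g x. Subspaces of
   T_xM are represented by matrices through their row space (%MS). *)

Section PH.
Variables (R : realType) (M : Type) (d : nat).

Definition rnorm (g : M -> 'M[R]_d) (x : M) (v : 'rV[R]_d) : R :=
  Num.sqrt ((v *m g x *m v^T) 0 0).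

Definition riemannian_metric (g : M -> 'M[R]_d) : Prop :=
  forall x, (g x)^T = g x /\
    (forall v : 'rV[R]_d, v != 0 -> 0 < (v *m g x *m v^T) 0 0).

(* n-th iterate of the derivative along the forward orbit of x:
   Df^n_x = Df_x then Df_{f x} ... then Df_{f^{n-1} x} *)
Fixpoint Dfn (f : M -> M) (Df : M -> 'M[R]_d) (x : M) (n : nat) : 'M[R]_d :=
  match n with
  | 0 => 1%:M
  | n'.+1 => Df x *m Dfn f Df (f x) n'
  end.

Definition is_orbit (f : M -> M) (o : int -> M) : Prop :=
  forall n : int, f (o n) = o (n + 1).

Definition ph_splitting (f : M -> M) (Df : M -> 'M[R]_d) (g : M -> 'M[R]_d)
    (nu g1 g2 mu C : R) (o : int -> M) (Es Ec Eu : int -> 'M[R]_d) : Prop :=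
  (forall i : int,
      (\rank (Es i + Ec i + Eu i)%MS = (\rank (Es i) + \rank (Ec i) + \rank (Eu i))%N) /\ (1%:M <= Es i + Ec i + Eu i)%MS) /\
  (forall i : int,
      (Es i *m Df (o i) == Es ((i + 1)%R))%MS /\
      (Ec i *m Df (o i) == Ec ((i + 1)%R))%MS /\
      (Eu i *m Df (o i) == Eu ((i + 1)%R))%MS) /\
  (forall (n : nat) (i : int) (v : 'rV[R]_d), (v <= Es i)%MS ->
      rnorm g (iter n f (o i)) (v *m Dfn f Df (o i) n)
        <= C * nu ^+ n * rnorm g (o i) v) /\
  (forall (n : nat) (i : int) (v : 'rV[R]_d), (v <= Ec i)%MS ->
      C^-1 * g1 ^+ n * rnorm g (o i) v
        <= rnorm g (iter n f (o i)) (v *m Dfn f Df (o i) n) /\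
      rnorm g (iter n f (o i)) (v *m Dfn f Df (o i) n)
        <= C * g2 ^+ n * rnorm g (o i) v) /\
  (forall (n : nat) (i : int) (v : 'rV[R]_d), (v <= Eu i)%MS ->
      C^-1 * mu ^+ n * rnorm g (o i) v
        <= rnorm g (iter n f (o i)) (v *m Dfn f Df (o i) n)).

Definition ph_endomorphism (f : M -> M) (Df : M -> 'M[R]_d) (g : M -> 'M[R]_d)
    (nu g1 g2 mu C : R) : Prop :=
  (forall x, Df x \in unitmx) /\            (* local diffeomorphism *)
  riemannian_metric g /\
  0 < nu /\ nu < g1 /\ g1 <= g2 /\ g2 < mu /\ nu < 1 /\ 1 < mu /\ 1 < C /\
  (forall o, is_orbit f o ->
     exists Es Ec Eu : int -> 'M[R]_d, ph_splitting f Df g nu g1 g2 mu C o Es Ec Eu).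

End PH.

(* A vector [v] at [x] whose forward iterates grow at most like [g2 ^+ n]
   has no unstable component: the unstable part of [v *m Df^n] is the
   difference of [v *m Df^n] and of the images of the stable and center
   parts, so it also grows at most like [g2 ^+ n], while it has to grow at
   least like [mu ^+ n] with [g2 < mu] unless it vanishes. Stable and center
   vectors of any orbit through [x] grow at most like [g2 ^+ n], hence lie in
   [Es + Ec] of every other orbit through [x]. *)
From HB Require Import structures.
From mathcomp Require Import all_boot all_order all_algebra.
From mathcomp Require Import reals.
From mathcomp Require Import ring lra.
Set Implicit Arguments. Unset Strict Implicit. Unset Printing Implicit Defensive.
Import Order.TTheory GRing.Theory Num.Theory.
Local Open Scope ring_scope.

Lemma bernoulli_le (R : realDomainType) (h : R) (n : nat) :
  0 <= h -> 1 + n%:R * h <= (1 + h) ^+ n.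
Proof.
move=> h_ge0; elim: n => [|n IHn]; first by rewrite expr0 mul0r addr0.
have nh_ge0 : 0 <= n%:R * h by rewrite mulr_ge0.
have pow_ge1 : 1 <= (1 + h) ^+ n by rewrite exprn_ege1 // lerDl.
rewrite exprS -natr1; nra.
Qed.

Section GeometricGrowth.
Variable R : archiRealFieldType.

Lemma bounded_geometric_le0 (c B r : R) :
  1 < r -> (forall n, c * r ^+ n <= B) -> c <= 0.
Proof.
move=> r_gt1 bounded; rewrite leNgt; apply/negP => c_gt0.
have r1_gt0 : 0 < r - 1 by rewrite subr_gt0.
have rc_gt0 : 0 < c * (r - 1) by rewrite mulr_gt0.
have B_ge0 : 0 <= B by have := bounded 0%N; rewrite expr0 mulr1; lra.
have /archi_boundP := divr_ge0 B_ge0 (ltW rc_gt0).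
set N := Num.Def.archi_bound _ => N_big.
have := bernoulli_le N (ltW r1_gt0); rewrite (addrC 1 (r - 1)) subrK => rN_big.
have : c * (1 + N%:R * (r - 1)) <= B.
  by apply: le_trans (bounded N); rewrite ler_pM2l.
rewrite ltr_pdivrMr // in N_big; nra.
Qed.

Lemma geometric_domination_le0 (c B a b : R) :
  0 < a -> a < b -> (forall n, c * b ^+ n <= B * a ^+ n) -> c <= 0.
Proof.
move=> a_gt0 ab dominated; apply: (@bounded_geometric_le0 c B (b / a)).
  by rewrite ltr_pdivlMr // mul1r.
by move=> n; rewrite expr_div_n mulrA ler_pdivrMr ?exprn_gt0.
Qed.

End GeometricGrowth.

Lemma sub_adds3mx_decomp (F : fieldType) (m1 m2 m3 n : nat)
    (A : 'M[F]_(m1, n)) (B : 'M[F]_(m2, n)) (C : 'M[F]_(m3, n)) (v : 'rV[F]_n) :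
  (v <= A + B + C)%MS ->
  exists a b c, [/\ v = a + b + c, (a <= A)%MS, (b <= B)%MS & (c <= C)%MS].
Proof.
case/sub_addsmxP=> [[u w]] /= ->; case/sub_addsmxP: (submxMl u (A + B)%MS).
move=> [a b] /= ->; exists (a *m A), (b *m B), (w *m C).
by split; rewrite ?submxMl.
Qed.

Section RiemannianNorm.
Variables (R : realType) (M : Type) (d : nat) (g : M -> 'M[R]_d).

Local Notation gram x v := ((v *m g x *m v^T) 0 0).

Lemma gram_parallelogram (x : M) (u v : 'rV[R]_d) :
  gram x (u + v) + gram x (u - v) = 2 * gram x u + 2 * gram x v.
Proof.
rewrite linearD linearB /= !(mulmxDl, mulmxBl, mulmxDr, mulmxBr, mulNmx, mulmxN) opprK.
move: (u *m g x *m u^T) (u *m g x *m v^T) (v *m g x *m u^T) (v *m g x *m v^T).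
by move=> uu uv vu vv; rewrite !mxE; lra.
Qed.

Lemma rnormN (x : M) (v : 'rV[R]_d) : rnorm g x (- v) = rnorm g x v.
Proof. by rewrite /rnorm linearN /= !mulNmx mulmxN opprK. Qed.

Hypothesis g_metric : riemannian_metric g.

Lemma gram_ge0 (x : M) (v : 'rV[R]_d) : 0 <= gram x v.
Proof.
have [->|v_neq0] := eqVneq v 0; first by rewrite !mul0mx mxE.
exact/ltW/(g_metric x).2.
Qed.

Lemma rnorm_eq0 (x : M) (v : 'rV[R]_d) : (rnorm g x v == 0) = (v == 0).
Proof.
rewrite sqrtr_eq0; have [->|v_neq0] := eqVneq v 0; first by rewrite !mul0mx mxE lexx.
by rewrite leNgt (g_metric x).2.
Qed.

(* A weak triangle inequality that needs only the parallelogram law, not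
   Cauchy-Schwarz; the constant [2] is harmless for growth rates. *)
Lemma rnormD_le (x : M) (u v : 'rV[R]_d) :
  rnorm g x (u + v) <= 2 * (rnorm g x u + rnorm g x v).
Proof.
have gram_sum_le : gram x (u + v) <= 2 * gram x u + 2 * gram x v.
  by have := gram_parallelogram x u v; have := gram_ge0 x (u - v); lra.
have sum_ge0 : 0 <= 2 * (rnorm g x u + rnorm g x v).
  by rewrite mulr_ge0 ?addr_ge0 ?sqrtr_ge0.
apply: le_trans (ler_wsqrtr gram_sum_le) _.
rewrite -[X in _ <= X]ger0_norm // -sqrtr_sqr ler_wsqrtr //.
have := sqr_sqrtr (gram_ge0 x u); have := sqr_sqrtr (gram_ge0 x v).
have := sqrtr_ge0 (gram x u); have := sqrtr_ge0 (gram x v); rewrite /rnorm; nra.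
Qed.

End RiemannianNorm.

Section PartialHyperbolicity.
Variables (R : realType) (M : Type) (d : nat).
Variables (f : M -> M) (Df g : M -> 'M[R]_d) (nu g1 g2 mu C : R).
Hypotheses (g_metric : riemannian_metric g) (nu_gt0 : 0 < nu).
Hypotheses (nu_le_g2 : nu <= g2) (g2_lt_mu : g2 < mu) (C_gt0 : 0 < C).

Let g2_gt0 : 0 < g2 := lt_le_trans nu_gt0 nu_le_g2.

Section OneSplitting.
Variables (o : int -> M) (Es Ec Eu : int -> 'M[R]_d).
Hypothesis splitting : ph_splitting f Df g nu g1 g2 mu C o Es Ec Eu.

Local Notation growth n v := (rnorm g (iter n f (o 0)) (v *m Dfn f Df (o 0) n)).

Lemma stable_growth_le (v : 'rV[R]_d) (n : nat) :
  (v <= Es 0)%MS -> growth n v <= C * rnorm g (o 0) v * g2 ^+ n.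
Proof.
move=> v_stable; have [_ [_ [stable _]]] := splitting.
apply: le_trans (stable n 0 v v_stable) _.
rewrite mulrAC ler_wpM2l ?mulr_ge0 ?sqrtr_ge0 ?(ltW C_gt0) //.
by rewrite lerXn2r // nnegrE ltW.
Qed.

Lemma center_growth_le (v : 'rV[R]_d) (n : nat) :
  (v <= Ec 0)%MS -> growth n v <= C * rnorm g (o 0) v * g2 ^+ n.
Proof.
move=> v_center; have [_ [_ [_ [center _]]]] := splitting.
by rewrite mulrAC; exact: (center n 0 v v_center).2.
Qed.

Lemma sub_stable_center_of_slow_growth (v : 'rV[R]_d) (K : R) :
  (forall n, growth n v <= K * g2 ^+ n) -> (v <= Es 0 + Ec 0)%MS.
Proof.
have [full [_ [_ [_ unstable]]]] := splitting.
have /sub_adds3mx_decomp[vs [vc [vu [-> vs_stable vc_center vu_unstable]]]] :=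
  submx_trans (submx1 v) (full 0).2.
move=> v_slow; suff -> : vu = 0 by rewrite addr0 addmx_sub_adds.
set B := 2 * K + 4 * (C * rnorm g (o 0) vs) + 4 * (C * rnorm g (o 0) vc).
have vu_slow n : growth n vu <= B * g2 ^+ n.
  set D := Dfn f Df (o 0) n; set y := iter n f (o 0).
  have -> : vu *m D = (vs + vc + vu) *m D + - (vs *m D + vc *m D).
    by rewrite !mulmxDl (addrC (vs *m D + vc *m D)) addrK.
  have := rnormD_le g_metric y ((vs + vc + vu) *m D) (- (vs *m D + vc *m D)).
  have := rnormD_le g_metric y (vs *m D) (vc *m D); rewrite rnormN.
  have := v_slow n; have := stable_growth_le n vs_stable.
  have := center_growth_le n vc_center; rewrite /B; nra.
have : C^-1 * rnorm g (o 0) vu <= 0.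
  apply: (@geometric_domination_le0 _ _ B g2 mu) => // n.
  by rewrite mulrAC; apply: le_trans (unstable n 0 vu vu_unstable) (vu_slow n).
rewrite pmulr_rle0 ?invr_gt0 // => vu_norm_le0.
by apply/eqP; rewrite -(rnorm_eq0 g_metric (o 0)) // eq_le vu_norm_le0 sqrtr_ge0.
Qed.

End OneSplitting.

Lemma stable_center_sub (x : M) (o o' : int -> M)
    (Es Ec Eu Es' Ec' Eu' : int -> 'M[R]_d) :
  o 0 = x -> o' 0 = x ->
  ph_splitting f Df g nu g1 g2 mu C o Es Ec Eu ->
  ph_splitting f Df g nu g1 g2 mu C o' Es' Ec' Eu' ->
  (Es' 0 + Ec' 0 <= Es 0 + Ec 0)%MS.
Proof.
move=> o_x o'_x split split'; rewrite addsmx_sub.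
apply/andP; split; apply/row_subP => i.
- apply: (sub_stable_center_of_slow_growth split
    (K := C * rnorm g (o 0) (row i (Es' 0)))) => n.
  by rewrite o_x -o'_x; exact (stable_growth_le split' n (row_sub i _)).
- apply: (sub_stable_center_of_slow_growth split
    (K := C * rnorm g (o 0) (row i (Ec' 0)))) => n.
  by rewrite o_x -o'_x; exact (center_growth_le split' n (row_sub i _)).
Qed.

End PartialHyperbolicity.

Theorem mainTheorem8 (R : realType) (M : Type) (d : nat)
    (f : M -> M) (Df : M -> 'M[R]_d) (g : M -> 'M[R]_d)
    (nu g1 g2 mu C : R) :
  ph_endomorphism f Df g nu g1 g2 mu C ->
  forall (x : M) (o1 o2 : int -> M) (Es1 Ec1 Eu1 Es2 Ec2 Eu2 : int -> 'M[R]_d),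
    is_orbit f o1 -> o1 0 = x ->
    ph_splitting f Df g nu g1 g2 mu C o1 Es1 Ec1 Eu1 ->
    is_orbit f o2 -> o2 0 = x ->
    ph_splitting f Df g nu g1 g2 mu C o2 Es2 Ec2 Eu2 ->
    (Ec2 0 <= Ec1 0 + Es1 0)%MS /\ (Ec1 0 + Es1 0 == Ec2 0 + Es2 0)%MS.
Proof.
move=> [_ [g_metric [nu_gt0 [nu_lt_g1 [g1_le_g2 [g2_lt_mu [_ [_ [C_gt1 _]]]]]]]]].
move=> x o1 o2 Es1 Ec1 Eu1 Es2 Ec2 Eu2 _ o1_x split1 _ o2_x split2.
have nu_le_g2 : nu <= g2 by exact: le_trans (ltW nu_lt_g1) g1_le_g2.
have C_gt0 : 0 < C by exact: lt_trans ltr01 C_gt1.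
have sub21 :=
  stable_center_sub g_metric nu_gt0 nu_le_g2 g2_lt_mu C_gt0 o1_x o2_x split1 split2.
have sub12 :=
  stable_center_sub g_metric nu_gt0 nu_le_g2 g2_lt_mu C_gt0 o2_x o1_x split2 split1.
rewrite (addsmxC (Ec1 0) (Es1 0)) (addsmxC (Ec2 0) (Es2 0)).
by split; [exact: submx_trans (addsmxSr _ _) sub21 | apply/andP].
Qed.
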